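(* Let $(X,d_X)$ be a compact geodesic metric space, $r\in X$, $d=d_X(r,\cdot)$, and let $(G,d_G)$ be either the metric Reeb graph of $d$ or the metric $\alpha$-Reeb graph of $d$, assumed to be a finite graph, with quotient map $\pi:X\to G$. Then $\pi$ is $1$-Lipschitz: for all $x,y\in X$, $d_G(\pi(x),\pi(y))\le d_X(x,y)$.
   Context: Reeb graph: for $x,y\in X$ set $x\sim y$ iff $d(x)=d(y)$ and $x,y$ lie in the same path-connected component of $d^{-1}(d(x))$; $G=X/\sim$, with quotient map $\pi:X\to G$. $\alpha$-Reeb graph: given $\alpha>0$ and a covering $\mathcal I=\{I_i\}$ of the range of $d$ by open intervals of length at most $\alpha$, let $\sim_\alpha$ be the transitive closure of the relation ''$d(x)=d(y)$ and $x,y$ lie in the same path-connected component of $d^{-1}(I_i)$ for some $i$''; $G=X/\sim_\alpha$. In both cases $d$ induces $d_*:G\to\mathbb R_+$ with $d=d_*\circ\pi$. Metric structure (assuming $G$ is a finite topological graph): the vertex set $V$ consists of the points of degree $\neq 2$, the local maxima of $d_*$, and $\pi(r)$; the edges are the connected components of $G\setminus V$. Each edge is given length equal to the absolute difference of $d_*$ at its endpoints, the distance between two points $p,p'$ of the same edge being $|d_*(p)-d_*(p')|$; $d_G$ is the resulting metric-graph metric. *)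

From Stdlib Require Import Reals List Relations.
From Coquelicot Require Import Coquelicot.
Open Scope R_scope.
Set Implicit Arguments.

Section Defs.
Variable X : Type.
Variable dX : X -> X -> R.
Implicit Types (I : Type).

Definition is_metric : Prop :=
  (forall x y, 0 <= dX x y) /\
  (forall x y, dX x y = 0 <-> x = y) /\
  (forall x y, dX x y = dX y x) /\
  (forall x y z, dX x z <= dX x y + dX y z).

Definition openX (U : X -> Prop) : Prop :=
  forall x, U x -> exists eps, 0 < eps /\ forall y, dX x y < eps -> U y.

Definition compactX : Prop :=
  forall (I : Type) (U : I -> X -> Prop),
    (forall i, openX (U i)) -> (forall x, exists i, U i x) ->
    exists l : list I, forall x, exists i, In i l /\ U i x.

Definition geodesicX : Prop :=
  forall x y, exists g : R -> X, g 0 = x /\ g (dX x y) = y /\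
    forall s t, 0 <= s <= dX x y -> 0 <= t <= dX x y ->
      dX (g s) (g t) = Rabs (s - t).

(* continuous path [0,1] -> X (only the values on [0,1] matter) *)
Definition pathX (g : R -> X) : Prop :=
  forall t, 0 <= t <= 1 -> forall eps, 0 < eps -> exists delta, 0 < delta /\
    forall s, 0 <= s <= 1 -> Rabs (s - t) < delta -> dX (g s) (g t) < eps.

Definition same_path_comp (P : X -> Prop) (x y : X) : Prop :=
  exists g : R -> X, pathX g /\ g 0 = x /\ g 1 = y /\
    forall t, 0 <= t <= 1 -> P (g t).

Definition reeb_rel (d : X -> R) (x y : X) : Prop :=
  d x = d y /\ same_path_comp (fun z => d z = d x) x y.

Definition alpha_cover (d : X -> R) (alpha : R) (I : Type) (a b : I -> R) : Prop :=
  (forall i, b i - a i <= alpha) /\ (forall x, exists i, a i < d x < b i).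

Definition alpha_base (d : X -> R) (I : Type) (a b : I -> R) (x y : X) : Prop :=
  d x = d y /\ exists i, same_path_comp (fun z => a i < d z < b i) x y.

Definition alpha_rel (d : X -> R) (I : Type) (a b : I -> R) : X -> X -> Prop :=
  clos_refl_trans X (alpha_base d a b).

Variable G : Type.
Variable pi : X -> G.

Definition openG (U : G -> Prop) : Prop := openX (fun x => U (pi x)).

Definition closureG (C : G -> Prop) (p : G) : Prop :=
  forall U, openG U -> U p -> exists q, U q /\ C q.

Definition connectedG (S : G -> Prop) : Prop :=
  ~ exists U W, openG U /\ openG W /\
      (forall p, S p -> U p \/ W p) /\
      (exists p, S p /\ U p) /\ (exists p, S p /\ W p) /\
      (forall p, S p -> U p -> W p -> False).

Definition componentG (A C : G -> Prop) : Prop :=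
  (exists p, C p) /\ (forall p, C p -> A p) /\ connectedG C /\
  (forall C', (forall p, C p -> C' p) -> (forall p, C' p -> A p) ->
     connectedG C' -> forall p, C' p -> C p).

Definition relopen01 (U : R -> Prop) : Prop :=
  forall t, 0 <= t <= 1 -> U t -> exists delta, 0 < delta /\
    forall s, 0 <= s <= 1 -> Rabs (s - t) < delta -> U s.

(* G (with the quotient topology) is a finite topological graph:
   finitely many vertices V0 and m edges E j : [0,1] -> G (j < m), such that
   G is the CW complex they form (cells disjoint, covering, CW topology). *)
Definition finite_graph (V0 : list G) (m : nat) (E : nat -> R -> G) : Prop :=
  (forall j, (j < m)%nat -> In (E j 0) V0 /\ In (E j 1) V0) /\
  (forall j t, (j < m)%nat -> 0 < t < 1 -> ~ In (E j t) V0) /\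
  (forall p, ~ In p V0 -> exists j t, (j < m)%nat /\ 0 < t < 1 /\ E j t = p) /\
  (forall j j' t t', (j < m)%nat -> (j' < m)%nat -> 0 < t < 1 -> 0 < t' < 1 ->
     E j t = E j' t' -> j = j' /\ t = t') /\
  (forall U, openG U <-> forall j, (j < m)%nat -> relopen01 (fun t => U (E j t))).

Definition edge_end (E : nat -> R -> G) (j : nat) (s : bool) : G :=
  E j (if s then 1 else 0).

Definition degree2 (V0 : list G) (m : nat) (E : nat -> R -> G) (p : G) : Prop :=
  ~ In p V0 \/
  exists j1 s1 j2 s2, (j1 < m)%nat /\ (j2 < m)%nat /\ (j1, s1) <> (j2, s2) /\
    edge_end E j1 s1 = p /\ edge_end E j2 s2 = p /\
    forall j s, (j < m)%nat -> edge_end E j s = p -> (j, s) = (j1, s1) \/ (j, s) = (j2, s2).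

Definition local_maxG (dstar : G -> R) (p : G) : Prop :=
  exists U, openG U /\ U p /\ forall q, U q -> dstar q <= dstar p.

Definition vertexG (V0 : list G) (m : nat) (E : nat -> R -> G)
  (dstar : G -> R) (r : X) (p : G) : Prop :=
  ~ degree2 V0 m E p \/ local_maxG dstar p \/ p = pi r.

(* p and q lie in (the closure of) a common edge = component of G \ V *)
Definition same_edge (Vs : G -> Prop) (p q : G) : Prop :=
  exists C, componentG (fun z => ~ Vs z) C /\ closureG C p /\ closureG C q.

Fixpoint chain_adm (Rel : G -> G -> Prop) (p : G) (l : list G) : Prop :=
  match l with nil => True | q :: l' => Rel p q /\ chain_adm Rel q l' end.

Fixpoint chain_len (dstar : G -> R) (p : G) (l : list G) : R :=
  match l with nil => 0 | q :: l' => Rabs (dstar p - dstar q) + chain_len dstar q l' end.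

(* metric-graph metric: infimum of lengths of chains p = p0, ..., pn = q with
   consecutive points on a common (closed) edge, where distance on an edge is
   |dstar p - dstar p'| *)
Definition dG (Vs : G -> Prop) (dstar : G -> R) (p q : G) : Rbar :=
  Glb_Rbar (fun L => exists l, chain_adm (same_edge Vs) p l /\ last l p = q /\
                               L = chain_len dstar p l).
End Defs.

(* Follow a geodesic g from x to y.  Every point p of G has an open neighbourhood
   all of whose points share a closed edge with p.  Indeed, in a geodesic space
   the height dX r . has no local minimum away from r, so two local maxima on one
   edge must have pi r between them; hence the vertices of the metric structure
   are isolated along every edge.  As the height is 1-Lipschitz, passing from
   pi (g s) to pi (g t) along an edge costs at most t - s, and real induction
   along the geodesic yields an edge chain from pi x to pi y of length at most
   dX x y. *)

From Stdlib Require Import Reals List Relations Lra Lia Classical.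
From Coquelicot Require Import Coquelicot.
Open Scope R_scope.

Lemma ex_pos_le2 a b : 0 < a -> 0 < b -> exists e, 0 < e /\ e <= a /\ e <= b.
Proof.
  intros; exists (Rmin a b).
  split; [apply Rmin_pos; auto | split; [apply Rmin_l | apply Rmin_r]].
Qed.

Lemma ex_pos_le4 a b c d : 0 < a -> 0 < b -> 0 < c -> 0 < d ->
  exists e, 0 < e /\ e <= a /\ e <= b /\ e <= c /\ e <= d.
Proof.
  intros.
  destruct (ex_pos_le2 a b) as [e1 [? [? ?]]]; auto.
  destruct (ex_pos_le2 c d) as [e2 [? [? ?]]]; auto.
  destruct (ex_pos_le2 e1 e2) as [e [? [? ?]]]; auto.
  exists e; repeat split; lra.
Qed.

Lemma real_induction (P : R -> Prop) a b :
  a <= b -> P a ->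
  (forall t, a <= t <= b -> exists eta, 0 < eta /\
     forall s, a <= s <= b -> Rabs (s - t) < eta ->
       (s <= t -> P s -> P t) /\ (t <= s -> P t -> P s)) ->
  P b.
Proof.
  intros Hab Pa Hloc.
  set (S := fun s => a <= s <= b /\ forall u, a <= u <= s -> P u).
  assert (Sa : S a) by (split; [lra | intros u Hu; replace u with a by lra; auto]).
  destruct (completeness S) as [c [Hub Hlub]].
  { exists b; intros s [Hs _]; lra. }
  { exists a; exact Sa. }
  assert (Hac : a <= c) by (apply Hub, Sa).
  assert (Hcb : c <= b) by (apply Hlub; intros s [Hs _]; lra).
  assert (Hbelow : forall u, a <= u < c -> P u).
  { intros u Hu; apply NNPP; intro nPu.
    enough (c <= u) by lra.
    apply Hlub; intros s [_ Hs].
    destruct (Rle_dec s u); [auto | exfalso; apply nPu, Hs; lra]. }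
  destruct (Hloc c (conj Hac Hcb)) as [eta [Heta Hc]].
  assert (Pc : P c).
  { destruct (Req_dec a c) as [<- | Hne]; [exact Pa |].
    destruct (ex_pos_le2 (c - a) (eta / 2)) as [e [He [? ?]]]; try lra.
    apply (proj1 (Hc (c - e) ltac:(lra) ltac:(apply Rabs_lt_between'; lra))); [lra |].
    apply Hbelow; lra. }
  destruct (Req_dec c b) as [<- | Hne]; [exact Pc |].
  destruct (ex_pos_le2 (b - c) (eta / 2)) as [e [He [? ?]]]; try lra.
  enough (Sce : S (c + e)) by (specialize (Hub _ Sce); lra).
  split; [lra |]; intros u Hu.
  destruct (Rtotal_order u c) as [? | [-> | ?]]; [apply Hbelow; lra | exact Pc |].
  apply (proj2 (Hc u ltac:(lra) ltac:(apply Rabs_lt_between'; lra))); [lra | exact Pc].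
Qed.

Definition open_in_interval (lo hi : R) (U : R -> Prop) : Prop :=
  forall s, lo < s < hi -> U s ->
    exists d, 0 < d /\ forall u, lo < u < hi -> Rabs (u - s) < d -> U u.

Lemma open_interval_connected (U W : R -> Prop) lo hi a b :
  (forall s, lo < s < hi -> U s \/ W s) ->
  (forall s, lo < s < hi -> U s -> W s -> False) ->
  open_in_interval lo hi U -> open_in_interval lo hi W ->
  lo < a < hi -> U a -> lo < b < hi -> W b -> False.
Proof.
  revert U W a b.
  enough (Hle : forall U W a b,
    (forall s, lo < s < hi -> U s \/ W s) ->
    (forall s, lo < s < hi -> U s -> W s -> False) ->
    open_in_interval lo hi U -> open_in_interval lo hi W ->
    lo < a < hi -> U a -> lo < b < hi -> W b -> a <= b -> False).
  { intros U W a b Hcov Hdis HU HW Ha Ua Hb Wb.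
    destruct (Rle_dec a b) as [Hab | Hba].
    { exact (Hle U W a b Hcov Hdis HU HW Ha Ua Hb Wb Hab). }
    apply (Hle W U b a); auto; try lra.
    - intros s Hs; destruct (Hcov s Hs); auto.
    - intros s Hs Ws Us; exact (Hdis s Hs Us Ws). }
  intros U W a b Hcov Hdis HU HW Ha Ua Hb Wb Hab.
  apply (Hdis b); [lra | | exact Wb].
  apply (real_induction U a b Hab Ua).
  intros t Ht.
  destruct (Hcov t ltac:(lra)) as [Ut | Wt].
  - destruct (HU t ltac:(lra) Ut) as [d [Hd Hnb]].
    exists d; split; [exact Hd |]; intros s Hs Hst; split; [auto |].
    intros _ _; apply Hnb; [lra | exact Hst].
  - destruct (HW t ltac:(lra) Wt) as [d [Hd Hnb]].
    exists d; split; [exact Hd |]; intros s Hs Hst; split; intros _ Us; exfalso.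
    + apply (Hdis s ltac:(lra) Us), Hnb; [lra | exact Hst].
    + exact (Hdis t ltac:(lra) Us Wt).
Qed.

Lemma uniform_radius (m : nat) (Q : nat -> R -> Prop) :
  (forall j e e', 0 < e' <= e -> Q j e -> Q j e') ->
  (forall j, (j < m)%nat -> exists e, 0 < e /\ Q j e) ->
  exists e, 0 < e /\ forall j, (j < m)%nat -> Q j e.
Proof.
  intros Hmono; induction m as [| m IH]; intros H.
  - exists 1; split; [lra | intros j Hj; lia].
  - destruct IH as [e1 [He1 Q1]]; [intros j Hj; apply H; lia |].
    destruct (H m ltac:(lia)) as [e2 [He2 Q2]].
    destruct (ex_pos_le2 e1 e2) as [e [He [? ?]]]; auto.
    exists e; split; [exact He |]; intros j Hj.
    destruct (PeanoNat.Nat.eq_dec j m) as [-> | Hne].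
    + apply (Hmono m e2); [lra | exact Q2].
    + apply (Hmono j e1); [lra | apply Q1; lia].
Qed.

Lemma dist_reverse_triangle (X : Type) (dX : X -> X -> R) (Hmet : is_metric dX) r x y :
  Rabs (dX r y - dX r x) <= dX x y.
Proof.
  destruct Hmet as [_ [_ [Hsym Htri]]].
  pose proof (Htri r x y); pose proof (Htri r y x); rewrite (Hsym y x) in *.
  apply Rabs_le; lra.
Qed.

Lemma geodesic_descent (X : Type) (dX : X -> X -> R) (Hmet : is_metric dX)
  (Hgeo : geodesicX dX) r x eta :
  x <> r -> 0 < eta -> exists z, dX x z < eta /\ dX r z < dX r x.
Proof.
  intros Hxr Heta.
  destruct Hmet as [Hpos [Hsep [Hsym _]]].
  assert (HD : 0 < dX x r).
  { destruct (Rle_lt_or_eq_dec 0 _ (Hpos x r)) as [| H0]; [auto |].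
    exfalso; apply Hxr, Hsep; auto. }
  destruct (Hgeo x r) as [g [Hg0 [HgD Hg]]].
  destruct (ex_pos_le2 (eta / 2) (dX x r / 2)) as [u [Hu [? ?]]]; try lra.
  exists (g u); split.
  - rewrite <- Hg0 at 1; rewrite Hg by lra; rewrite Rabs_left; lra.
  - rewrite <- HgD at 1; rewrite (Hsym r x), Hg by lra; rewrite Rabs_right; lra.
Qed.

Section FiniteGraph.
Variables (X : Type) (dX : X -> X -> R) (G : Type) (pi : X -> G).
Variables (V0 : list G) (m : nat) (E : nat -> R -> G).
Hypothesis Hfin : finite_graph dX pi V0 m E.

Lemma edge_interior_inj j j' s t :
  (j < m)%nat -> (j' < m)%nat -> 0 < s < 1 -> 0 <= t <= 1 ->
  E j s = E j' t -> j = j' /\ s = t.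
Proof.
  destruct Hfin as [Hends [Hint [_ [Hinj _]]]]; intros Hj Hj' Hs Ht Heq.
  assert (Ht' : 0 < t < 1).
  { destruct (Req_dec t 0) as [-> | Ht0]; [| destruct (Req_dec t 1) as [-> | Ht1]]; try lra;
      exfalso; apply (Hint j s Hj Hs); rewrite Heq; apply (Hends j' Hj'). }
  exact (Hinj j j' s t Hj Hj' Hs Ht' Heq).
Qed.

Lemma openG_on_edge U j t :
  openG dX pi U -> (j < m)%nat -> 0 <= t <= 1 -> U (E j t) ->
  exists d, 0 < d /\ forall s, 0 <= s <= 1 -> Rabs (s - t) < d -> U (E j s).
Proof.
  destruct Hfin as [_ [_ [_ [_ Htop]]]]; intros HU Hj.
  exact (proj1 (Htop U) HU j Hj t).
Qed.

Lemma openG_of_edges U :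
  (forall j t, (j < m)%nat -> 0 <= t <= 1 -> U (E j t) ->
     exists d, 0 < d /\ forall s, 0 <= s <= 1 -> Rabs (s - t) < d -> U (E j s)) ->
  openG dX pi U.
Proof.
  destruct Hfin as [_ [_ [_ [_ Htop]]]]; intros HU.
  apply Htop; intros j Hj t Ht; exact (HU j t Hj Ht).
Qed.

Lemma edge_point_isolated q j s0 : (j < m)%nat ->
  exists e, 0 < e /\ forall s, 0 < s < 1 -> s <> s0 -> Rabs (s - s0) < e -> E j s <> q.
Proof.
  intros Hj.
  destruct (classic (exists s1, 0 < s1 < 1 /\ s1 <> s0 /\ E j s1 = q))
    as [[s1 [Hs1 [Hs10 <-]]] | Hnone].
  - exists (Rabs (s1 - s0)); split; [apply Rabs_pos_lt; lra |].
    intros s Hs Hss0 Hlt Heq.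
    destruct (edge_interior_inj j j s s1 Hj Hj Hs ltac:(lra) Heq) as [_ ->]; lra.
  - exists 1; split; [lra |]; intros s Hs Hss0 _ Heq; apply Hnone; exists s; auto.
Qed.

Definition edge_arc (j : nat) (lo hi : R) (q : G) : Prop :=
  exists u, lo < u < hi /\ 0 < u < 1 /\ E j u = q.

Lemma edge_arc_open j lo hi : (j < m)%nat -> openG dX pi (edge_arc j lo hi).
Proof.
  intros Hj; apply openG_of_edges; intros j' t Hj' Ht [u [Hu [Hu01 Heq]]].
  destruct (edge_interior_inj j j' u t Hj Hj' Hu01 Ht Heq) as [<- <-].
  destruct (ex_pos_le4 (u - lo) (hi - u) u (1 - u)) as [e [He [? [? [? ?]]]]]; try lra.
  exists e; split; [exact He |]; intros s Hs Hsu; apply Rabs_lt_between' in Hsu.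
  exists s; repeat split; lra.
Qed.

Lemma edge_arc_closure j lo hi u :
  (j < m)%nat -> 0 <= lo -> lo < hi -> hi <= 1 -> lo <= u <= hi ->
  closureG dX pi (edge_arc j lo hi) (E j u).
Proof.
  intros Hj Hlo Hlohi Hhi Hu U HU HUu.
  destruct (openG_on_edge U j u HU Hj ltac:(lra) HUu) as [d [Hd Hnb]].
  destruct (Rlt_dec u hi).
  - destruct (ex_pos_le2 (d / 2) ((hi - u) / 2)) as [e [He [? ?]]]; try lra.
    exists (E j (u + e)); split.
    + apply Hnb; [lra | apply Rabs_lt_between'; lra].
    + exists (u + e); repeat split; lra.
  - destruct (ex_pos_le2 (d / 2) ((hi - lo) / 2)) as [e [He [? ?]]]; try lra.
    exists (E j (u - e)); split.
    + apply Hnb; [lra | apply Rabs_lt_between'; lra].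
    + exists (u - e); repeat split; lra.
Qed.

Lemma edge_arc_connected j lo hi :
  (j < m)%nat -> 0 <= lo -> lo < hi -> hi <= 1 -> connectedG dX pi (edge_arc j lo hi).
Proof.
  intros Hj Hlo Hlohi Hhi [U [W [HU [HW [Hcov [[p [[a [Ha [Ha01 <-]]] Ua]]
    [[q [[b [Hb [Hb01 <-]]] Wb]] Hdis]]]]]]].
  assert (Hopen : forall V, openG dX pi V -> open_in_interval lo hi (fun s => V (E j s))).
  { intros V HV s Hs HVs.
    destruct (openG_on_edge V j s HV Hj ltac:(lra) HVs) as [d [Hd Hnb]].
    exists d; split; [exact Hd |]; intros u Hu Hus; apply Hnb; [lra | exact Hus]. }
  apply (open_interval_connected (fun s => U (E j s)) (fun s => W (E j s)) lo hi a b);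
    auto; intros s Hs; [apply Hcov | apply Hdis]; exists s; repeat split; lra.
Qed.

Lemma connectedG_not_meet_both (S K U W : G -> Prop) :
  connectedG dX pi K -> (forall p, K p -> S p) ->
  openG dX pi U -> openG dX pi W ->
  (forall p, S p -> U p \/ W p) -> (forall p, S p -> U p -> W p -> False) ->
  (exists p, K p /\ U p) -> (exists p, K p /\ W p) -> False.
Proof.
  intros HK HKS HU HW Hcov Hdis HKU HKW; apply HK.
  exists U, W; repeat split; auto; intros p Kp; apply Hdis; auto.
Qed.

Lemma connectedG_union_at (F : (G -> Prop) -> Prop) p0 :
  (forall K, F K -> connectedG dX pi K /\ K p0) ->
  connectedG dX pi (fun z => exists K, F K /\ K z).
Proof.
  set (S := fun z => exists K, F K /\ K z).
  intros HF [U [W [HU [HW [Hcov [[p [[K [FK Kp]] Up]] [[q [[K' [FK' K'q]] Wq]] Hdis]]]]]]].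
  assert (HS : forall K, F K -> forall z, K z -> S z) by (intros K0 FK0 z Kz; exists K0; auto).
  destruct (HF K FK) as [_ Kp0].
  destruct (Hcov p0 (HS K FK p0 Kp0)) as [Up0 | Wp0].
  - destruct (HF K' FK') as [HK' K'p0].
    apply (connectedG_not_meet_both S K' U W HK' (HS K' FK') HU HW Hcov Hdis);
      [exists p0 | exists q]; auto.
  - destruct (HF K FK) as [HK _].
    apply (connectedG_not_meet_both S K U W HK (HS K FK) HU HW Hcov Hdis);
      [exists p | exists p0]; auto.
Qed.

Lemma same_edge_of_arc (Vs : G -> Prop) j lo hi u1 u2 :
  (j < m)%nat -> 0 <= lo -> lo < hi -> hi <= 1 ->
  (forall q, edge_arc j lo hi q -> ~ Vs q) -> lo <= u1 <= hi -> lo <= u2 <= hi ->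
  same_edge dX pi Vs (E j u1) (E j u2).
Proof.
  intros Hj Hlo Hlohi Hhi HV Hu1 Hu2.
  set (T := edge_arc j lo hi).
  set (t0 := E j ((lo + hi) / 2)).
  assert (Tt0 : T t0) by (exists ((lo + hi) / 2); repeat split; lra).
  set (F := fun K => connectedG dX pi K /\ (forall w, K w -> ~ Vs w) /\ K t0).
  assert (FT : F T) by (repeat split; auto; apply edge_arc_connected; auto).
  exists (fun z => exists K, F K /\ K z); split; [split; [| split; [| split]] | split].
  - exists t0, T; auto.
  - intros p [K [[_ [HK _]] Kp]]; auto.
  - apply (connectedG_union_at F t0); intros K [HK [_ Kt0]]; auto.
  - intros C' HC' HC'V HC'c p C'p.
    exists C'; repeat split; auto.
    apply HC'; exists T; auto.
  - intros U HU HUu; destruct (edge_arc_closure j lo hi u1 Hj Hlo Hlohi Hhi Hu1 U HU HUu)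
      as [q [Uq Tq]]; exists q; split; [exact Uq | exists T; auto].
  - intros U HU HUu; destruct (edge_arc_closure j lo hi u2 Hj Hlo Hlohi Hhi Hu2 U HU HUu)
      as [q [Uq Tq]]; exists q; split; [exact Uq | exists T; auto].
Qed.

Lemma same_edge_sym (Vs : G -> Prop) p q :
  same_edge dX pi Vs p q -> same_edge dX pi Vs q p.
Proof. intros [C [HC [Hp Hq]]]; exists C; auto. Qed.

Lemma same_edge_near (Vs : G -> Prop) j tb e u :
  (j < m)%nat -> 0 <= tb <= 1 -> 0 <= u <= 1 -> Rabs (u - tb) < e ->
  (forall s, 0 < s < 1 -> s <> tb -> Rabs (s - tb) < e -> ~ Vs (E j s)) ->
  E j u = E j tb \/ same_edge dX pi Vs (E j tb) (E j u).
Proof.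
  intros Hj Htb Hu Hue Hiso; apply Rabs_lt_between' in Hue.
  destruct (Rtotal_order u tb) as [Hlt | [-> | Hgt]]; [right | left; reflexivity | right].
  - apply (same_edge_of_arc Vs j u tb tb u Hj); try lra.
    intros q [w [Hw [Hw01 <-]]]; apply Hiso; [exact Hw01 | intros ->; lra |].
    apply Rabs_lt_between'; lra.
  - apply (same_edge_of_arc Vs j tb u tb u Hj); try lra.
    intros q [w [Hw [Hw01 <-]]]; apply Hiso; [exact Hw01 | intros ->; lra |].
    apply Rabs_lt_between'; lra.
Qed.

Definition vertex_star (p : G) (e : R) (q : G) : Prop :=
  q = p \/ exists j tb, (j < m)%nat /\ (tb = 0 \/ tb = 1) /\ E j tb = p /\
                        edge_arc j (tb - e) (tb + e) q.

Lemma vertex_star_open p e : In p V0 -> 0 < e <= 1 / 2 -> openG dX pi (vertex_star p e).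
Proof.
  intros Hp He; apply openG_of_edges.
  intros j t Hj Ht [Hq | [j0 [tb [Hj0 [Htb [Hp0 [u [Hu [Hu01 Hq]]]]]]]]].
  - assert (Ht01 : t = 0 \/ t = 1).
    { destruct Hfin as [_ [Hint _]].
      destruct (Req_dec t 0); [left | destruct (Req_dec t 1); [right | exfalso]]; auto.
      apply (Hint j t Hj); [lra | rewrite Hq; exact Hp]. }
    exists e; split; [lra |]; intros s Hs Hst; apply Rabs_lt_between' in Hst.
    destruct (Rtotal_order s t) as [? | [-> | ?]]; [right | left; exact Hq | right];
      exists j, t; (split; [exact Hj | split; [exact Ht01 | split; [exact Hq |]]]);
      exists s; destruct Ht01 as [-> | ->]; repeat split; lra.
  - destruct (edge_interior_inj j0 j u t Hj0 Hj Hu01 Ht Hq) as [<- <-].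
    destruct (ex_pos_le4 (u - (tb - e)) (tb + e - u) u (1 - u)) as [d [Hd [? [? [? ?]]]]];
      try lra.
    exists d; split; [exact Hd |]; intros s Hs Hsu; apply Rabs_lt_between' in Hsu.
    right; exists j0, tb; repeat split; auto.
    exists s; repeat split; lra.
Qed.

Section Height.
Hypothesis Hmet : is_metric dX.
Hypothesis Hgeo : geodesicX dX.
Hypothesis Hsurj : forall p : G, exists x, pi x = p.
Variables (r : X) (dstar : G -> R).
Hypothesis Hdstar : forall x, dstar (pi x) = dX r x.

Local Notation Vs := (vertexG dX pi V0 m E dstar r).

Lemma openG_height_ball v eps : openG dX pi (fun q => Rabs (dstar q - v) < eps).
Proof.
  intros x Hx; cbn in Hx; rewrite Hdstar in Hx.
  exists (eps - Rabs (dX r x - v)); split; [lra |]; intros y Hy; cbn; rewrite Hdstar.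
  pose proof (dist_reverse_triangle X dX Hmet r x y).
  replace (dX r y - v) with ((dX r y - dX r x) + (dX r x - v)) by ring.
  eapply Rle_lt_trans; [apply Rabs_triang | lra].
Qed.

Lemma edge_height_continuous j c :
  (j < m)%nat -> 0 < c < 1 -> continuity_pt (fun u => dstar (E j u)) c.
Proof.
  intros Hj Hc eps Heps.
  destruct (openG_on_edge _ j c (openG_height_ball (dstar (E j c)) eps) Hj ltac:(lra))
    as [d [Hd Hnb]].
  { cbn; rewrite Rminus_diag, Rabs_R0; exact Heps. }
  destruct (ex_pos_le4 d c (1 - c) 1) as [e [He [? [? [? ?]]]]]; try lra.
  exists e; split; [exact He |]; intros u [_ Hu]; unfold R_dist in *.
  apply Rabs_lt_between' in Hu; apply Hnb; [lra | apply Rabs_lt_between'; lra].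
Qed.

(* Moving from a preimage of E j s0 towards r along a geodesic lowers the height. *)
Lemma no_edge_local_min j s0 eps :
  (j < m)%nat -> 0 < s0 < 1 -> E j s0 <> pi r -> 0 < eps ->
  (forall u, 0 < u < 1 -> Rabs (u - s0) < eps -> dstar (E j s0) <= dstar (E j u)) ->
  False.
Proof.
  intros Hj Hs0 Hr Heps Hmin.
  destruct (Hsurj (E j s0)) as [x0 Hx0].
  destruct (edge_arc_open j (s0 - eps) (s0 + eps) Hj x0) as [eta [Heta Hball]].
  { exists s0; repeat split; auto; lra. }
  destruct (geodesic_descent X dX Hmet Hgeo r x0 eta) as [z [Hz Hlower]]; auto.
  { intros ->; exact (Hr (eq_sym Hx0)). }
  destruct (Hball z Hz) as [s [Hs [Hs01 Hsz]]].
  specialize (Hmin s Hs01 ltac:(apply Rabs_lt_between'; lra)).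
  rewrite Hsz, <- Hx0, !Hdstar in Hmin; lra.
Qed.

Definition edge_local_max (j : nat) (s : R) : Prop :=
  exists d, 0 < d /\
    forall u, 0 <= u <= 1 -> Rabs (u - s) < d -> dstar (E j u) <= dstar (E j s).

Lemma local_maxG_edge j s :
  (j < m)%nat -> 0 <= s <= 1 -> local_maxG dX pi dstar (E j s) -> edge_local_max j s.
Proof.
  intros Hj Hs [U [HU [HUp HUmax]]].
  destruct (openG_on_edge U j s HU Hj Hs HUp) as [d [Hd Hnb]].
  exists d; split; [exact Hd |]; intros u Hu Hud; apply HUmax, Hnb; auto.
Qed.

(* A minimum of the height on [a, b] can be moved into (a, b), where it is a local
   minimum. *)
Lemma no_two_edge_local_max j a b :
  (j < m)%nat -> 0 < a -> a < b -> b < 1 -> edge_local_max j a -> edge_local_max j b ->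
  (forall u, a <= u <= b -> E j u <> pi r) -> False.
Proof.
  intros Hj Ha Hab Hb [da [Hda Hmaxa]] [db [Hdb Hmaxb]] Hr.
  assert (Hmin : exists c, a < c < b /\
            forall u, a <= u <= b -> dstar (E j c) <= dstar (E j u)).
  { destruct (continuity_ab_min (fun u => dstar (E j u)) a b ltac:(lra)) as [c [Hc Hcab]].
    { intros c Hc; apply edge_height_continuous; auto; lra. }
    cbn in Hc.
    destruct (Req_dec c a) as [-> | Hca]; [| destruct (Req_dec c b) as [-> | Hcb]].
    - destruct (ex_pos_le2 da (b - a)) as [e [He [? ?]]]; try lra.
      exists (a + e / 2); split; [lra |]; intros u Hu.
      apply Rle_trans with (dstar (E j a)); [| exact (Hc u Hu)].
      apply Hmaxa; [lra | apply Rabs_lt_between'; lra].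
    - destruct (ex_pos_le2 db (b - a)) as [e [He [? ?]]]; try lra.
      exists (b - e / 2); split; [lra |]; intros u Hu.
      apply Rle_trans with (dstar (E j b)); [| exact (Hc u Hu)].
      apply Hmaxb; [lra | apply Rabs_lt_between'; lra].
    - exists c; split; [lra | exact Hc]. }
  destruct Hmin as [c [Hc Hcmin]].
  destruct (ex_pos_le2 (c - a) (b - c)) as [e [He [? ?]]]; try lra.
  apply (no_edge_local_min j c e Hj ltac:(lra) (Hr c ltac:(lra)) He).
  intros u Hu Hue; apply Rabs_lt_between' in Hue; apply Hcmin; lra.
Qed.

Lemma vertexG_isolated_on_edge j s0 : (j < m)%nat ->
  exists eps, 0 < eps /\
    forall s, 0 < s < 1 -> s <> s0 -> Rabs (s - s0) < eps -> ~ Vs (E j s).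
Proof.
  intros Hj.
  destruct (edge_point_isolated (pi r) j s0 Hj) as [e0 [He0 Hr]].
  assert (Hmax : forall s, 0 < s < 1 -> s <> s0 -> Rabs (s - s0) < e0 ->
            Vs (E j s) -> edge_local_max j s).
  { destruct Hfin as [_ [Hint _]].
    intros s Hs Hss0 Hse [Hdeg | [Hloc | Hsr]].
    - exfalso; apply Hdeg; left; apply Hint; auto.
    - apply local_maxG_edge; auto; lra.
    - exfalso; exact (Hr s Hs Hss0 Hse Hsr). }
  assert (Hpair : forall x y, 0 < x -> y < 1 -> x < y -> s0 - e0 < x -> y < s0 + e0 ->
            (s0 < x \/ y < s0) -> Vs (E j x) -> Vs (E j y) -> False).
  { intros x y Hx Hy Hxy Hxe Hye Hside Vx Vy.
    assert (Hin : forall u, x <= u <= y -> 0 < u < 1 /\ u <> s0 /\ Rabs (u - s0) < e0).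
    { intros u Hu; destruct Hside; (split; [lra | split; [intros ->; lra |]]);
        apply Rabs_lt_between'; lra. }
    destruct (Hin x ltac:(lra)) as [? [? ?]]; destruct (Hin y ltac:(lra)) as [? [? ?]].
    apply (no_two_edge_local_max j x y); auto.
    intros u Hu; destruct (Hin u Hu) as [? [? ?]]; apply Hr; auto. }
  apply NNPP; intros Hno.
  assert (Hnear : forall e, 0 < e -> exists s, 0 < s < 1 /\ s <> s0 /\
            Rabs (s - s0) < e /\ Vs (E j s)).
  { intros e He; apply NNPP; intros Hn; apply Hno; exists e; split; [exact He |].
    intros s Hs Hss0 Hse HV; apply Hn; exists s; auto. }
  (* Three vertices accumulating at s0: two of them lie on the same side of s0. *)
  destruct (Hnear e0 He0) as [s1 [? [? [? V1]]]].
  destruct (Hnear (Rabs (s1 - s0))) as [s2 [? [? [? V2]]]]; [apply Rabs_pos_lt; lra |].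
  destruct (Hnear (Rabs (s2 - s0))) as [s3 [? [? [? V3]]]]; [apply Rabs_pos_lt; lra |].
  unfold Rabs in *; repeat destruct Rcase_abs;
  first [ solve [apply (Hpair s1 s2); auto; lra] | solve [apply (Hpair s2 s1); auto; lra]
        | solve [apply (Hpair s1 s3); auto; lra] | solve [apply (Hpair s3 s1); auto; lra]
        | solve [apply (Hpair s2 s3); auto; lra] | solve [apply (Hpair s3 s2); auto; lra] ].
Qed.

Lemma star_nbhd_interior j s0 : (j < m)%nat -> 0 < s0 < 1 ->
  exists W, openG dX pi W /\ W (E j s0) /\
    forall q, W q -> q = E j s0 \/ same_edge dX pi Vs (E j s0) q.
Proof.
  intros Hj Hs0.
  destruct (vertexG_isolated_on_edge j s0 Hj) as [eps [Heps Hiso]].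
  destruct (ex_pos_le4 eps s0 (1 - s0) 1) as [e [He [? [? [? ?]]]]]; try lra.
  exists (edge_arc j (s0 - e) (s0 + e)); split; [apply edge_arc_open; exact Hj |].
  split; [exists s0; repeat split; lra |].
  intros q [u [Hu [Hu01 <-]]].
  apply (same_edge_near Vs j s0 eps u Hj); try lra; [apply Rabs_lt_between'; lra |].
  intros s Hs Hss0 Hse; apply Hiso; auto; lra.
Qed.

Lemma star_nbhd_vertex p : In p V0 ->
  exists W, openG dX pi W /\ W p /\ forall q, W q -> q = p \/ same_edge dX pi Vs p q.
Proof.
  intros Hp.
  set (Q := fun j e => forall tb, tb = 0 \/ tb = 1 ->
              forall s, 0 < s < 1 -> Rabs (s - tb) < e -> ~ Vs (E j s)).
  destruct (uniform_radius m Q) as [e0 [He0 HQ]].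
  { intros j e e' He' Hq tb Htb s Hs Hse; apply (Hq tb Htb s Hs); lra. }
  { intros j Hj.
    destruct (vertexG_isolated_on_edge j 0 Hj) as [e1 [He1 Iso0]].
    destruct (vertexG_isolated_on_edge j 1 Hj) as [e2 [He2 Iso1]].
    destruct (ex_pos_le2 e1 e2) as [e [He [? ?]]]; auto.
    exists e; split; [exact He |]; intros tb [-> | ->] s Hs Hse;
      [apply Iso0 | apply Iso1]; auto; try lra; intros ->; lra. }
  destruct (ex_pos_le2 e0 (1 / 2)) as [e [He [? ?]]]; try lra.
  exists (vertex_star p e); split; [apply vertex_star_open; auto; lra |].
  split; [left; reflexivity |].
  intros q [-> | [j [tb [Hj [Htb [<- [u [Hu [Hu01 <-]]]]]]]]]; [left; reflexivity |].
  apply (same_edge_near Vs j tb e u Hj); try (destruct Htb as [-> | ->]; lra).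
  - apply Rabs_lt_between'; lra.
  - intros s Hs _ Hse; apply (HQ j Hj tb Htb s Hs); lra.
Qed.

Lemma star_nbhd p :
  exists W, openG dX pi W /\ W p /\ forall q, W q -> q = p \/ same_edge dX pi Vs p q.
Proof.
  destruct (classic (In p V0)) as [Hp | Hp]; [exact (star_nbhd_vertex p Hp) |].
  destruct Hfin as [_ [_ [Hcov _]]].
  destruct (Hcov p Hp) as [j [s0 [Hj [Hs0 <-]]]].
  exact (star_nbhd_interior j s0 Hj Hs0).
Qed.

End Height.
End FiniteGraph.

Lemma last_cons_default {A : Type} (l : list A) a p : last (a :: l) p = last l a.
Proof.
  revert a p; induction l as [| b l IH]; intros a p; [reflexivity |].
  change (last (b :: l) p = last (b :: l) a); rewrite !IH; reflexivity.
Qed.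

Definition chain_within {G : Type} (Rel : G -> G -> Prop) (dstar : G -> R)
    (p0 : G) (L : R) (p : G) : Prop :=
  exists l, chain_adm Rel p0 l /\ last l p0 = p /\ chain_len dstar p0 l <= L.

Lemma chain_within_nil {G : Type} (Rel : G -> G -> Prop) dstar (p0 : G) L :
  0 <= L -> chain_within Rel dstar p0 L p0.
Proof. intros HL; exists nil; cbn; repeat split; lra. Qed.

Lemma chain_within_snoc {G : Type} (Rel : G -> G -> Prop) dstar (p0 p q : G) L L' :
  chain_within Rel dstar p0 L p -> Rel p q -> L + Rabs (dstar p - dstar q) <= L' ->
  chain_within Rel dstar p0 L' q.
Proof.
  intros [l [Hadm [Hlast Hlen]]] Hpq HL; exists (l ++ q :: nil).
  assert (Happ : forall p1, chain_adm Rel p1 l -> Rel (last l p1) q ->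
                   chain_adm Rel p1 (l ++ q :: nil) /\
                   chain_len dstar p1 (l ++ q :: nil) =
                     chain_len dstar p1 l + Rabs (dstar (last l p1) - dstar q)).
  { clear; induction l as [| a l IH]; intros p1 Hadm Hrel; [cbn in *; split; [tauto | ring] |].
    cbn [app chain_adm chain_len] in *; destruct Hadm as [Hp1a Hadm].
    rewrite last_cons_default in Hrel.
    destruct (IH a Hadm Hrel) as [IH1 IH2]; rewrite last_cons_default, IH2.
    split; [tauto | ring]. }
  rewrite <- Hlast in Hpq; destruct (Happ p0 Hadm Hpq) as [Hadm' Hlen'].
  rewrite Hlen', Hlast, last_last; repeat split; [exact Hadm' | lra].
Qed.

Lemma chain_within_step {G : Type} (Rel : G -> G -> Prop) dstar (p0 p q : G) L L' :
  (q = p \/ Rel p q) -> L + Rabs (dstar p - dstar q) <= L' ->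
  chain_within Rel dstar p0 L p -> chain_within Rel dstar p0 L' q.
Proof.
  intros [-> | Hpq] HL Hchain; [| exact (chain_within_snoc Rel dstar p0 p q L L' Hchain Hpq HL)].
  destruct Hchain as [l [Hadm [Hlast Hlen]]].
  rewrite Rminus_diag, Rabs_R0 in HL; exists l; repeat split; auto; lra.
Qed.

Lemma dG_le_chain_within (X G : Type) (dX : X -> X -> R) (pi : X -> G) Vs dstar p0 L p :
  chain_within (same_edge dX pi Vs) dstar p0 L p -> Rbar_le (dG dX pi Vs dstar p0 p) L.
Proof.
  intros [l [Hadm [Hlast Hlen]]]; unfold dG.
  apply Rbar_le_trans with (Finite (chain_len dstar p0 l)); [| exact Hlen].
  apply Glb_Rbar_correct; exists l; auto.
Qed.

Theorem lemma5
  (X : Type) (dX : X -> X -> R)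
  (Hmet : is_metric dX) (Hcpt : compactX dX) (Hgeo : geodesicX dX)
  (r : X)
  (G : Type) (pi : X -> G) (Hsurj : forall p : G, exists x, pi x = p)
  (dstar : G -> R) (Hdstar : forall x, dstar (pi x) = dX r x)
  (HG : (forall x y, pi x = pi y <-> reeb_rel dX (fun z => dX r z) x y) \/
        (exists (alpha : R) (I : Type) (a b : I -> R),
           0 < alpha /\ alpha_cover (fun z => dX r z) alpha a b /\
           forall x y, pi x = pi y <-> alpha_rel dX (fun z => dX r z) a b x y))
  (V0 : list G) (m : nat) (E : nat -> R -> G)
  (Hfin : finite_graph dX pi V0 m E) :
  forall x y : X,
    Rbar_le (dG dX pi (vertexG dX pi V0 m E dstar r) dstar (pi x) (pi y)) (Finite (dX x y)).
Proof.
  intros x y.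
  set (Rel := same_edge dX pi (vertexG dX pi V0 m E dstar r)).
  destruct (Hgeo x y) as [g [Hg0 [HgD Hg]]].
  assert (HD : 0 <= dX x y) by apply Hmet.
  assert (Hcost : forall s t, 0 <= s -> s <= t -> t <= dX x y ->
            Rabs (dstar (pi (g s)) - dstar (pi (g t))) <= t - s).
  { intros s t Hs Hst Ht; rewrite !Hdstar, Rabs_minus_sym.
    replace (t - s) with (Rabs (s - t)) by (rewrite Rabs_left1; lra).
    rewrite <- (Hg s t) by lra; apply dist_reverse_triangle, Hmet. }
  apply dG_le_chain_within; replace (pi y) with (pi (g (dX x y))) by now rewrite HgD.
  apply (real_induction (fun t => chain_within Rel dstar (pi x) t (pi (g t))) 0 (dX x y) HD).
  { rewrite Hg0; apply chain_within_nil; lra. }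
  intros t Ht.
  destruct (star_nbhd X dX G pi V0 m E Hfin Hmet Hgeo Hsurj r dstar Hdstar (pi (g t)))
    as [W [HW [HWt Hstar]]].
  destruct (HW (g t) HWt) as [eta [Heta Hball]].
  exists eta; split; [exact Heta |]; intros s Hs Hst.
  assert (Hnb : pi (g s) = pi (g t) \/ Rel (pi (g t)) (pi (g s))).
  { apply Hstar, Hball; rewrite Hg by auto; rewrite Rabs_minus_sym; exact Hst. }
  split; intros Hle.
  - apply (chain_within_step Rel dstar (pi x) (pi (g s)) (pi (g t)) s t);
      [| pose proof (Hcost s t); lra].
    destruct Hnb as [-> | Hrel]; [left; reflexivity | right; apply same_edge_sym, Hrel].
  - apply (chain_within_step Rel dstar (pi x) (pi (g t)) (pi (g s)) t s Hnb).
    pose proof (Hcost t s); lra.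
Qed.
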